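(* Let $k\ge0$, $m\ge1$, and let $\varepsilon,\varepsilon'\in\{0,1\}^k$ be binary sequences differing only at position $r$ ($1\le r\le k$). Then $P(\varepsilon;b)-P(\varepsilon';b)$ can be written as a quotient $f(a,x)/g(a,x)$ of polynomials with $g$ not divisible by the linear form $M(\varepsilon;b;r)$ $(=M(\varepsilon';b;r))$.
   Context: Let $a=(a_1,\dots,a_k)$ and $x=(x_1,\dots,x_m)$ be indeterminates and $b=(b_1,\dots,b_{k+m}):=(a_1,\dots,a_k,x_1,\dots,x_m)$. For a binary sequence $\varepsilon=(\varepsilon_1,\dots,\varepsilon_k)$ put $\delta^\varepsilon=(\delta^\varepsilon_1,\dots,\delta^\varepsilon_{k+m}):=(1,\varepsilon_1,\dots,\varepsilon_k,0,\dots,0)$ (length $k+m$: a $1$ prepended and $m-1$ zeros appended). Let $L(\delta^\varepsilon,j):=\max\{i\le j:\delta^\varepsilon_i=1\}$, $M(\varepsilon;b;j):=\sum_{\ell=L(\delta^\varepsilon,j)}^{j}b_\ell$, and $P(\varepsilon;b):=\prod_{j=1}^{k+m}\frac1{M(\varepsilon;b;j)}$. *)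

From HB Require Import structures.
From mathcomp Require Import all_boot all_order all_algebra.
From mathcomp Require Import fraction.
From mathcomp Require Import mpoly.
Set Implicit Arguments. Unset Strict Implicit. Unset Printing Implicit Defensive.
Import GRing.Theory.
Local Open Scope ring_scope.

(* Polynomial ring Q[a_1..a_k, x_1..x_m] with n = k+m variables; the
   1-indexed variable b_l (1 <= l <= n) is 'X_(l-1). *)
Definition bvar (n l : nat) : {mpoly rat[n]} :=
  match (insub l.-1 : option 'I_n) with Some i => 'X_i | None => 0 end.

(* delta^eps (1-indexed, length k+m): delta_1 = 1, delta_{i} = eps_{i-1}
   for 2 <= i <= k+1, and 0 afterwards. eps is given as a list of length k,
   eps_i = nth false eps (i-1). *)
Definition delta (k : nat) (eps : seq bool) (i : nat) : bool :=
  if i == 1%N then true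
  else if (i <= k.+1)%N then nth false eps (i - 2) else false.

Definition Lidx (k : nat) (eps : seq bool) (j : nat) : nat :=
  \max_(1 <= i < j.+1 | delta k eps i) i.

Definition Mform (k m : nat) (eps : seq bool) (j : nat) : {mpoly rat[k + m]} :=
  \sum_(Lidx k eps j <= l < j.+1) bvar (k + m) l.

Definition Pfun (k m : nat) (eps : seq bool) : {fraction {mpoly rat[k + m]}} :=
  \prod_(1 <= j < (k + m).+1) (tofrac (Mform k m eps j))^-1.

Definition mdvd (n : nat) (p q : {mpoly rat[n]}) : Prop :=
  exists h : {mpoly rat[n]}, q = p * h.

(* Factor out the common linear form: P(eps) = 1 / (M_r * A(eps)), where A(eps) is the
   product of the other forms M_j, and M_r is the same for eps and eps'.  Flipping
   eps_r = delta_(r+1) moves each L(delta, j) at most between r+1 and L(delta, r), so every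
   M_j changes by 0 or +-M_r; hence A(eps') - A(eps) = M_r h and
   P(eps) - P(eps') = h / (A(eps) A(eps')).  Finally M_r does not divide A(eps) A(eps'):
   at the point b_l = 1 (l < r), b_r = L(delta, r) - r, b_l = r (l > r) the form M_r
   vanishes while every other M_j is positive. *)
From HB Require Import structures.
From mathcomp Require Import all_boot all_order all_algebra.
From mathcomp Require Import fraction mpoly.
From mathcomp Require Import zify ring lra.
Import GRing.Theory Num.Theory.
Local Open Scope ring_scope.

Lemma prod_sub_mul (R : comNzRingType) (I : Type) (s : seq I) (P : pred I)
    (x y : I -> R) (u : R) :
  (forall i, exists c, x i - y i = u * c) ->
  exists h, \prod_(i <- s | P i) x i - \prod_(i <- s | P i) y i = u * h.
Proof.
move=> xy; elim: s => [|a s [h IHs]].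
  by exists 0; rewrite !big_nil subrr mulr0.
rewrite !big_cons; case: (P a); last by exists h.
have [c xya] := xy a.
set X := \prod_(j <- s | P j) x j in IHs *.
set Y := \prod_(j <- s | P j) y j in IHs *.
exists (c * X + y a * h).
have -> : x a = y a + u * c by rewrite -xya addrC subrK.
have -> : Y = X - u * h by rewrite -IHs opprB addrC subrK.
ring.
Qed.

Lemma invf_sub_common (F : fieldType) (u a a' h : F) :
  u != 0 -> a != 0 -> a' != 0 -> a' - a = u * h ->
  (u * a)^-1 - (u * a')^-1 = h / (a * a').
Proof.
move=> u0 a0 a'0 aa'; have -> : h = (a' - a) / u by rewrite aa' mulrAC divff ?mul1r.
by field; rewrite u0 a0 a'0.
Qed.

Lemma delta_succ k e {r} : (1 <= r <= k)%N -> delta k e r.+1 = nth false e r.-1.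
Proof.
move=> r1k; rewrite /delta ifF; last by apply/negbTE; lia.
by rewrite ifT; [congr nth; lia | lia].
Qed.

Lemma Lidx_ge1 k e j : (1 <= j)%N -> (1 <= Lidx k e j)%N.
Proof. by move=> j1; rewrite /Lidx big_ltn_cond // leq_maxl. Qed.

Lemma Lidx_le k e j : (Lidx k e j <= j)%N.
Proof.
rewrite /Lidx big_nat_cond; apply: (big_ind (fun x => x <= j)%N) => //.
  by move=> x y xj yj; rewrite geq_max xj yj.
by move=> i /andP[/andP[_ ij] _].
Qed.

Lemma Lidx_split k e {r j} : (r < j)%N ->
  Lidx k e j = maxn (Lidx k e r)
    (maxn (if delta k e r.+1 then r.+1 else 0%N)
          (\max_(r.+2 <= i < j.+1 | delta k e i) i)).
Proof.
move=> rj; rewrite /Lidx (@big_cat_nat _ _ _ r.+1 1 j.+1) //; last by lia.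
rewrite (@big_ltn_cond _ _ _ r.+1 j.+1); last by lia.
by case: (delta k e r.+1); rewrite ?max0n.
Qed.

Definition Mprod_except (k m : nat) (eps : seq bool) (r : nat) : {mpoly rat[k + m]} :=
  \prod_(1 <= j < (k + m).+1 | j != r) Mform k m eps j.

Lemma Pfun_split k m e {r} : (1 <= r <= k + m)%N ->
  Pfun k m e = (tofrac (Mform k m e r) * tofrac (Mprod_except k m e r))^-1.
Proof.
move=> r1n; rewrite /Pfun /Mprod_except (bigD1_seq r) ?iota_uniq //; last first.
  by rewrite mem_index_iota; lia.
by rewrite prodfV rmorph_prod invfM.
Qed.

Section DifferAtOnePosition.
Context {k : nat} (m : nat) {e e' : seq bool} {r : nat}.
Hypothesis r1k : (1 <= r <= k)%N.
Hypothesis neq_r : nth false e r.-1 != nth false e' r.-1.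
Hypothesis eq_off_r : forall i : nat, i != r.-1 -> nth false e i = nth false e' i.

Lemma delta_eq i : (1 <= i)%N -> i != r.+1 -> delta k e i = delta k e' i.
Proof.
move=> i1 ir; rewrite /delta; case: eqP => // i_neq1; case: (i <= k.+1)%N => //.
by apply: eq_off_r; lia.
Qed.

Lemma Lidx_eq_le {j} : (j <= r)%N -> Lidx k e j = Lidx k e' j.
Proof.
by move=> jr; apply: congr_big_nat => // i /andP[i1 ij]; apply: delta_eq; lia.
Qed.

Lemma Lidx_cases {j} : (r < j)%N ->
  [\/ Lidx k e j = Lidx k e' j,
      Lidx k e j = r.+1 /\ Lidx k e' j = Lidx k e r
    | Lidx k e' j = r.+1 /\ Lidx k e j = Lidx k e r].
Proof.
move=> rj; rewrite (Lidx_split k e rj) (Lidx_split k e' rj) -(Lidx_eq_le (leqnn r)).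
have -> : \max_(r.+2 <= i < j.+1 | delta k e' i) i =
          \max_(r.+2 <= i < j.+1 | delta k e i) i.
  by apply: congr_big_nat => // i /andP[i2 _]; symmetry; apply: delta_eq; lia.
set T := \max_(r.+2 <= i < j.+1 | delta k e i) i.
have T0_or_big : (T == 0)%N || (r.+2 <= T)%N.
  rewrite /T big_nat_cond.
  apply: (big_ind (fun x => (x == 0)%N || (r.+2 <= x)%N)) => //.
    by move=> x y /orP[/eqP->|x2] /orP[/eqP->|y2];
      rewrite ?max0n ?maxn0 ?leq_max ?x2 ?y2 ?orbT.
  by move=> i /andP[/andP[i2 _] _]; rewrite i2 orbT.
have := Lidx_le k e r; move: neq_r; rewrite -(delta_succ k e r1k) -(delta_succ k e' r1k).
case/orP: T0_or_big => [/eqP -> | rT];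
  case: (delta k e r.+1); case: (delta k e' r.+1) => // _ Lr.
- by apply: Or32; split; lia.
- by apply: Or33; split; lia.
- by apply: Or31; lia.
- by apply: Or31; lia.
Qed.

Lemma Mform_eq_r : Mform k m e' r = Mform k m e r.
Proof. by rewrite /Mform (Lidx_eq_le (leqnn r)). Qed.

Lemma Mform_sub_mul j : exists c, Mform k m e' j - Mform k m e j = Mform k m e r * c.
Proof.
case: (leqP j r) => [jr | rj].
  by exists 0; rewrite /Mform (Lidx_eq_le jr) subrr mulr0.
have split_at_r d d' : Lidx k d j = r.+1 -> Lidx k d' j = Lidx k e r ->
    Mform k m d' j = Mform k m e r + Mform k m d j.
  move=> Lj L'j; have Lr := Lidx_le k e r.
  by rewrite /Mform Lj L'j (@big_cat_nat _ _ _ r.+1 (Lidx k e r) j.+1) //; lia.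
case: (Lidx_cases rj) => [Ljj | [Lj L'j] | [L'j Lj]].
- by exists 0; rewrite /Mform Ljj subrr mulr0.
- by exists 1; rewrite (split_at_r e e') // mulr1 addrK.
- by exists (-1); rewrite (split_at_r e' e) // mulrN1 opprD addrCA subrr addr0.
Qed.

Lemma Mprod_except_sub_mul : exists h,
  Mprod_except k m e' r - Mprod_except k m e r = Mform k m e r * h.
Proof. exact: prod_sub_mul Mform_sub_mul. Qed.

End DifferAtOnePosition.

Definition vanishing_point (R : numDomainType) (r L : nat) (l : nat) : R :=
  if (l < r)%N then 1 else if l == r then L%:R - r%:R else r%:R.

Section VanishingPoint.
Variables (R : realFieldType) (r L0 : nat).
Hypothesis L0_r : (1 <= L0 <= r)%N.
Local Notation w := (@vanishing_point R r L0).

Lemma vanishing_point_ge0 l : l != r -> 0 <= w l.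
Proof. by move=> lr; rewrite /vanishing_point (negbTE lr); case: ifP. Qed.

Lemma sum_vanishing_point_r : \sum_(L0 <= l < r.+1) w l = 0.
Proof.
rewrite big_nat_recr /=; last by lia.
rewrite (@eq_big_nat _ _ _ L0 r _ (fun _ => 1)); last first.
  by move=> l /andP[_ lr]; rewrite /vanishing_point lr.
by rewrite sumr_const_nat /vanishing_point ltnn eqxx natrB; [ring | lia].
Qed.

Lemma sum_vanishing_point_gt0 L j : (L <= j)%N -> j != r -> 0 < \sum_(L <= l < j.+1) w l.
Proof.
move=> Lj jr; rewrite big_nat_recr //=.
have sum_ge0 a b : (r < a)%N || (b <= r)%N -> 0 <= \sum_(a <= l < b) w l.
  move=> rab; rewrite big_nat_cond; apply: sumr_ge0 => l /andP[/andP[al lb] _].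
  by apply: vanishing_point_ge0; lia.
have r_gt0 : (0 < r%:R :> R) by rewrite ltr0n; lia.
case: (ltnP j r) => [jr' | rj].
  have -> : w j = 1 by rewrite /vanishing_point jr'.
  by have := sum_ge0 L j ltac:(lia); lra.
have -> : w j = r%:R by rewrite /vanishing_point ltnNge rj (negbTE jr).
case: (ltnP r L) => [rL | Lr].
  by have := sum_ge0 L j ltac:(lia); lra.
rewrite (@big_cat_nat _ _ _ r L j) /=; [| lia | lia].
rewrite (@big_ltn _ _ _ r j) /=; last by lia.
have -> : w r = L0%:R - r%:R by rewrite /vanishing_point ltnn eqxx.
have := sum_ge0 L r ltac:(lia); have := sum_ge0 r.+1 j ltac:(lia).
have : (1 <= L0%:R :> R) by rewrite ler1n; lia.
lra.
Qed.

End VanishingPoint.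

Lemma meval_bvar n (w : nat -> rat) l : (1 <= l <= n)%N ->
  (bvar n l).@[fun i : 'I_n => w i.+1] = w l.
Proof.
move=> l1n; rewrite /bvar insubT; first by lia.
by move=> ?; rewrite mevalXU /= prednK //; lia.
Qed.

Lemma meval_Mform k m e (w : nat -> rat) {j} : (1 <= j <= k + m)%N ->
  (Mform k m e j).@[fun i : 'I_(k + m) => w i.+1] = \sum_(Lidx k e j <= l < j.+1) w l.
Proof.
move=> j1n; have L1 : (1 <= Lidx k e j)%N by apply: Lidx_ge1; case/andP: j1n.
rewrite raddf_sum; apply: eq_big_nat => l /andP[Ll lj].
by apply: meval_bvar; lia.
Qed.

Lemma Mform_neq0 k m e j : (1 <= j <= k + m)%N -> Mform k m e j != 0.
Proof.
move=> j1n; apply/eqP => M0; have := meval_Mform k m e (fun=> 1) j1n.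
rewrite M0 meval0 sumr_const_nat => /eqP; rewrite eq_sym pnatr_eq0.
by have := Lidx_le k e j; lia.
Qed.

Lemma Mform_meval_r k m e r : (1 <= r <= k + m)%N ->
  (Mform k m e r).@[fun i => vanishing_point rat r (Lidx k e r) i.+1] = 0.
Proof.
move=> r1n; rewrite (meval_Mform k m e (vanishing_point rat r (Lidx k e r))) //.
apply: sum_vanishing_point_r.
by rewrite Lidx_le Lidx_ge1 //; lia.
Qed.

Lemma Mprod_except_meval_neq0 k m e {r L0} : (1 <= L0 <= r)%N ->
  (Mprod_except k m e r).@[fun i => vanishing_point rat r L0 i.+1] != 0.
Proof.
move=> L0r; rewrite rmorph_prod prodf_seq_neq0; apply/allP => j.
rewrite mem_index_iota => j1n; apply/implyP => jr.
rewrite /= meval_Mform; last by lia.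
by apply/lt0r_neq0/sum_vanishing_point_gt0 => //; apply: Lidx_le.
Qed.

Lemma not_mdvd_of_root n (p q : {mpoly rat[n]}) v :
  p.@[v] = 0 -> q.@[v] != 0 -> ~ mdvd p q.
Proof. by move=> p0 q0 [h qph]; move: q0; rewrite qph mevalM p0 mul0r eqxx. Qed.

Lemma Mform_not_mdvd_Mprod_except k m e e' r : (1 <= r <= k + m)%N ->
  ~ mdvd (Mform k m e r) (Mprod_except k m e r * Mprod_except k m e' r).
Proof.
move=> r1n; have L0r : (1 <= Lidx k e r <= r)%N by rewrite Lidx_le Lidx_ge1 //; lia.
apply: not_mdvd_of_root; first exact: Mform_meval_r.
by rewrite mevalM mulf_neq0 // Mprod_except_meval_neq0.
Qed.

Lemma Mprod_except_neq0 k m e r : (1 <= r)%N -> Mprod_except k m e r != 0.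
Proof.
move=> r1; have L0r : (1 <= 1 <= r)%N by rewrite r1.
by apply: contraNneq (Mprod_except_meval_neq0 k m e L0r) => ->; rewrite meval0.
Qed.

Theorem mainTheorem7 (k m : nat) (eps eps' : seq bool) (r : nat) :
  (1 <= m)%N ->
  size eps = k -> size eps' = k ->
  (1 <= r <= k)%N ->
  nth false eps r.-1 != nth false eps' r.-1 ->
  (forall i : nat, i != r.-1 -> nth false eps i = nth false eps' i) ->
  exists f g : {mpoly rat[k + m]},
    ~ mdvd (Mform k m eps r) g /\
    Pfun k m eps - Pfun k m eps' = tofrac f / tofrac g.
Proof.
move=> _ _ _ r1k neq_r eq_off_r.
have r1n : (1 <= r <= k + m)%N by lia.
have [h Ah] := Mprod_except_sub_mul m r1k neq_r eq_off_r.
exists h, (Mprod_except k m eps r * Mprod_except k m eps' r); split.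
  exact: Mform_not_mdvd_Mprod_except.
rewrite (Pfun_split k m eps r1n) (Pfun_split k m eps' r1n).
rewrite (Mform_eq_r m r1k neq_r eq_off_r) rmorphM.
have r1 : (1 <= r)%N by case/andP: r1k.
apply: invf_sub_common; rewrite ?tofrac_eq0.
- exact: Mform_neq0.
- exact: Mprod_except_neq0.
- exact: Mprod_except_neq0.
- by move/(congr1 (@tofrac _)): Ah; rewrite tofracB tofracM.
Qed.
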